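(* Let $A\in\mathbb{C}^{n\times n}$, $B\in\mathbb{C}^{n\times m}$, $C\in\mathbb{C}^{p\times n}$, let $j\ge 1$, and let $\mathcal{R}(X):=A^HX+XA+C^HC-XBB^HX$. Suppose $A^HV_{j+1}\underline{K}_j=V_{j+1}\underline{H}_j$ is an orthonormal block rational Arnoldi decomposition (as defined in the context) with $V_{j+1}\in\mathbb{C}^{n\times (j+1)p}$, $\underline{K}_j,\underline{H}_j\in\mathbb{C}^{(j+1)p\times jp}$, where $\underline{K}_j$ has full column rank $jp$, and let $\tilde C\in\mathbb{C}^{(j+1)p\times p}$ satisfy $C^H=V_{j+1}\tilde C$. Let $\underline{L}_j\in\mathbb{C}^{(j+1)p\times jp}$ be such that $\underline{L}_j^H\underline{K}_j$ is nonsingular. Define $$A_j=\underline{H}_j^H\underline{L}_j(\underline{K}_j^H\underline{L}_j)^{-1},\quad B_j=\underline{K}_j^HV_{j+1}^HB,\quad C_j=\tilde C^H\underline{L}_j(\underline{K}_j^H\underline{L}_j)^{-1},$$ let $Y_j=Y_j^H\in\mathbb{C}^{jp\times jp}$ be a Hermitian solution of $A_j^HY_j+Y_jA_j+C_j^HC_j-Y_jB_jB_j^HY_j=0$, and set $X_j=V_{j+1}\underline{K}_jY_j\underline{K}_j^HV_{j+1}^H$. Let $U\in\mathbb{C}^{(j+1)p\times p}$ be a matrix whose columns form a basis of $\operatorname{range}(\underline{L}_j)^\perp$ and $W\in\mathbb{C}^{(j+1)p\times p}$ a matrix whose columns form a basis of $\operatorname{range}(\underline{K}_j)^\perp$ (orthogonal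 complements in $\mathbb{C}^{(j+1)p}$). Then $W^HU$ is nonsingular; define $$T=\underline{K}_jY_j\underline{H}_j^HW(U^HW)^{-1}+\bigl(\tilde C-\tfrac12 U(W^HU)^{-1}W^H\tilde C\bigr)\tilde C^HW(U^HW)^{-1}\in\mathbb{C}^{(j+1)p\times p},$$ and let $[U~~T]=QR$ be an economy-size QR decomposition with $Q\in\mathbb{C}^{(j+1)p\times 2p}$ having orthonormal columns and $R\in\mathbb{C}^{2p\times 2p}$. Then $\mathcal{R}(X_j)=V_{j+1}(UT^H+TU^H)V_{j+1}^H$, so $\operatorname{rank}\mathcal{R}(X_j)\le 2p$, and for every unitarily invariant norm $\|\cdot\|$, $$\|\mathcal{R}(X_j)\|=\left\|R\begin{bmatrix}0&I_p\\ I_p&0\end{bmatrix}R^H\right\|.$$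
   Context: Shifts: a set $\mathcal{S}_j=\{s_1,\dots,s_j\}\subset\mathbb{C}$ (finite) disjoint from the spectrum of $A^H$. The block rational Krylov space is $\mathfrak{K}_{j+1}=\operatorname{range}([C^H,(A^H-s_1I)^{-1}C^H,\dots,(A^H-s_jI)^{-1}C^H])$, assumed to have dimension $(j+1)p$. An orthonormal block rational Arnoldi decomposition (BRAD) is a relation $A^HV_{j+1}\underline{K}_j=V_{j+1}\underline{H}_j$ where: the columns of $V_{j+1}\in\mathbb{C}^{n\times(j+1)p}$ are orthonormal and span $\mathfrak{K}_{j+1}$; $\underline{H}_j,\underline{K}_j\in\mathbb{C}^{(j+1)p\times jp}$ are block upper Hessenberg with $p\times p$ blocks $H_{ik},K_{ik}$, where for each $i=1,\dots,j$ at least one of the subdiagonal blocks $H_{i+1,i},K_{i+1,i}$ is nonsingular and $\beta_iK_{i+1,i}=\gamma_iH_{i+1,i}$ for scalars with $|\beta_i|+|\gamma_i|\neq0$, the quotients $\beta_i/\gamma_i$ (the poles) being the shifts $s_1,\dots,s_j$. Here $\underline{K}_j$ is of full column rank. *)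

From HB Require Import structures.
From mathcomp Require Import all_boot all_order all_algebra.
From mathcomp Require Import sesquilinear spectral.
Set Implicit Arguments. Unset Strict Implicit. Unset Printing Implicit Defensive.
Import Order.TTheory GRing.Theory Num.Theory.
Local Open Scope ring_scope.

(* We work over an arbitrary numClosedFieldType C (e.g. the complex numbers);
   M ^t* is the conjugate transpose M^H (from mathcomp's spectral.v). *)

Section Defs.
Variable C : numClosedFieldType.
Local Open Scope sesquilinear_scope.

(* entry (x,y) of M as natural-number indices; 0 when out of range *)
Definition mxentry r c (M : 'M[C]_(r, c)) (x y : nat) : C :=
  \sum_(u : 'I_r | val u == x) \sum_(v : 'I_c | val v == y) M u v.

(* the p x p block (i,k) (0-based block indices) of M *)
Definition mxblk p r c (M : 'M[C]_(r, c)) (i k : nat) : 'M[C]_p :=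
  \matrix_(a < p, b < p) mxentry M (i * p + a) (k * p + b).

Definition block_upper_hessenberg p r c (M : 'M[C]_(r, c)) : Prop :=
  forall (x : 'I_r) (y : 'I_c), (y %/ p + 1 < x %/ p)%N -> M x y = 0.

(* the block rational Krylov space K_{j+1}, represented as a row space of
   transposed generators: range [C^H, (A^H - s_0 I)^{-1} C^H, ...,
   (A^H - s_{j-1} I)^{-1} C^H]  (shifts s_0..s_{j-1} = s_1..s_j of the paper) *)
Definition rat_krylov n p j (A : 'M[C]_n) (Cm : 'M[C]_(p, n)) (s : nat -> C)
  : 'M[C]_n :=
  (<< (Cm ^t*)^T >> +
   \sum_(i < j) << (invmx (A ^t* - s i *: 1%:M) *m Cm ^t*)^T >>)%MS.

Definition orth_BRAD n p j (A : 'M[C]_n) (Cm : 'M[C]_(p, n)) (s : nat -> C)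
  (V : 'M[C]_(n, j.+1 * p)) (K H : 'M[C]_(j.+1 * p, j * p)) : Prop :=
  (forall i, (i < j)%N -> ~~ eigenvalue (A ^t*) (s i)) /\
  \rank (rat_krylov j A Cm s) = (j.+1 * p)%N /\
  V ^t* *m V = 1%:M /\
  (V^T == rat_krylov j A Cm s)%MS /\
  A ^t* *m V *m K = V *m H /\
  block_upper_hessenberg p H /\ block_upper_hessenberg p K /\
  (forall i, (i < j)%N ->
     (mxblk p H i.+1 i \in unitmx \/ mxblk p K i.+1 i \in unitmx) /\
     exists beta gamma : C, `|beta| + `|gamma| != 0 /\ gamma != 0 /\
       beta / gamma = s i /\
       beta *: mxblk p K i.+1 i = gamma *: mxblk p H i.+1 i) /\
  \rank K = (j * p)%N.

Definition riccati n m p (A : 'M[C]_n) (B : 'M[C]_(n, m)) (Cm : 'M[C]_(p, n))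
  (X : 'M[C]_n) : 'M[C]_n :=
  A ^t* *m X + X *m A + Cm ^t* *m Cm - X *m B *m B ^t* *m X.

Definition perp_basis r k c (U : 'M[C]_(r, k)) (L : 'M[C]_(r, c)) : Prop :=
  row_free U^T /\
  forall v : 'cV[C]_r, (L ^t* *m v == 0) = (v^T <= U^T)%MS.

Definition unitary k (M : 'M[C]_k) : Prop := M *m M ^t* = 1%:M.

(* a unitarily invariant norm, as a family over all square dimensions,
   consistent under zero padding (as for norms induced by a symmetric
   gauge function of the singular values) *)
Definition unitarily_invariant_norm (N : forall k, 'M[C]_k -> C) : Prop :=
  (forall k (M : 'M[C]_k), N k M \is Num.real /\ 0 <= N k M) /\
  (forall k (M : 'M[C]_k), N k M = 0 -> M = 0) /\
  (forall k (a : C) (M : 'M[C]_k), N k (a *: M) = `|a| * N k M) /\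
  (forall k (M1 M2 : 'M[C]_k), N k (M1 + M2) <= N k M1 + N k M2) /\
  (forall k (P Q M : 'M[C]_k), unitary P -> unitary Q ->
      N k (P *m M *m Q) = N k M) /\
  (forall k l (M : 'M[C]_k), N (k + l)%N (block_mx M 0 0 (0 : 'M_l)) = N k M).

End Defs.

From mathcomp Require Import all_boot all_order all_algebra.
From mathcomp Require Import sesquilinear spectral.
Import Order.TTheory GRing.Theory Num.Theory.
Local Open Scope ring_scope.
Local Open Scope sesquilinear_scope.
Set Implicit Arguments.
Unset Strict Implicit.
Unset Printing Implicit Defensive.

(* Since A^H V K = V H and C^H = V Ct, the residual R(X_j) compresses to
   V M V^H, with M Hermitian of size (j+1)p.  For P = L (K^H L)^-1 we have
   K^H P = I, and P^H M P is the residual of the projected Riccati equation,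
   so L^H M L = 0.  With G = (W^H U)^-1 W^H the oblique projector I - U G
   has its adjoint's range in range(U)^perp = range(L), hence
   (I - U G) M (I - U G)^H = 0; expanding this gives M = U T^H + T U^H with
   T = (M - U G M / 2) G^H, which is the T of the statement because
   G K = 0.  Finally U T^H + T U^H = [U T] J [U T]^H = Q (R J R^H) Q^H and
   V Q has orthonormal columns, so rank and unitarily invariant norms are
   those of R J R^H. *)

Section ConjTranspose.
Variable C : numClosedFieldType.

Lemma trmxC_mul m n k (A : 'M[C]_(m, n)) (B : 'M[C]_(n, k)) :
  (A *m B) ^t* = B ^t* *m A ^t*.
Proof. by rewrite trmx_mul map_mxM. Qed.

Lemma trmxCD m n (A B : 'M[C]_(m, n)) : (A + B) ^t* = A ^t* + B ^t*.
Proof. by rewrite linearD map_mxD. Qed.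

Lemma trmxCB m n (A B : 'M[C]_(m, n)) : (A - B) ^t* = A ^t* - B ^t*.
Proof. by rewrite linearB map_mxB. Qed.

Lemma trmxCZ m n (a : C) (A : 'M[C]_(m, n)) : (a *: A) ^t* = a^* *: A ^t*.
Proof. by rewrite linearZ map_mxZ. Qed.

Lemma trmxC0 m n : (0 : 'M[C]_(m, n)) ^t* = 0.
Proof. by rewrite trmx0 map_mx0. Qed.

Lemma trmxC1 n : (1%:M : 'M[C]_n) ^t* = 1%:M.
Proof. by rewrite trmx1 map_mx1. Qed.

Lemma trmxC_inv n (A : 'M[C]_n) : (invmx A) ^t* = invmx (A ^t*).
Proof. by rewrite trmx_inv map_invmx. Qed.

Lemma trmxC_unit n (A : 'M[C]_n) : (A ^t* \in unitmx) = (A \in unitmx).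
Proof. by rewrite map_unitmx unitmx_tr. Qed.

Lemma trmxC_row_mx m n1 n2 (A : 'M[C]_(m, n1)) (B : 'M[C]_(m, n2)) :
  (row_mx A B) ^t* = col_mx (A ^t*) (B ^t*).
Proof. by rewrite tr_row_mx map_col_mx. Qed.

Lemma trmxC_col_mx m1 m2 n (A : 'M[C]_(m1, n)) (B : 'M[C]_(m2, n)) :
  (col_mx A B) ^t* = row_mx (A ^t*) (B ^t*).
Proof. by rewrite tr_col_mx map_row_mx. Qed.

Lemma trmxC_inj m n : injective (fun A : 'M[C]_(m, n) => A ^t*).
Proof. by move=> A B /(congr1 (fun M => M ^t*)); rewrite !trmxCK. Qed.

Lemma trmxC_mul_eq0 m n k (A : 'M[C]_(m, n)) (B : 'M[C]_(n, k)) :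
  A *m B = 0 -> B ^t* *m A ^t* = 0.
Proof. by move=> AB0; rewrite -trmxC_mul AB0 trmxC0. Qed.

End ConjTranspose.

(* spectral.v's (local) orthogonal complement for the standard product *)
Local Notation "B ^!" :=
  (orthomx Num.Def.conjC (mx_of_hermitian (hermitian1mx _)) B)
  : matrix_set_scope.

Section PerpBasis.
Variables (C : numClosedFieldType) (r k c : nat).
Variables (U : 'M[C]_(r, k)) (L : 'M[C]_(r, c)).
Hypothesis UperpL : perp_basis U L.

Lemma perp_basis_orthoE : (U^T :=: (L^T)^!)%MS.
Proof.
have subU (x : 'rV[C]_r) : (x <= U^T)%MS = (x <= (L^T)^!)%MS.
  rewrite orthomx1E -(trmxK x) -(proj2 UperpL) -trmx_eq0 trmx_mul trmxK.
  by rewrite map_trmx.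
by apply/eqmxP/andP; split; apply/row_subP => i; [rewrite -subU | rewrite subU];
  exact: row_sub.
Qed.

Lemma perp_basis_mul0 : L ^t* *m U = 0.
Proof.
have /orthomx1P UL0 : (U^T <= (L^T)^!)%MS by rewrite -perp_basis_orthoE.
by apply: trmx_inj; rewrite trmx_mul map_trmx UL0 trmx0.
Qed.

Lemma perp_basis_mul0C : U ^t* *m L = 0.
Proof. by rewrite -[L]trmxCK; apply: trmxC_mul_eq0; apply: perp_basis_mul0. Qed.

Lemma perp_basis_range q (y : 'M[C]_(r, q)) :
  U ^t* *m y = 0 -> exists z : 'M[C]_(c, q), y = L *m z.
Proof.
move=> Uy0; have : (y^T <= L^T)%MS.
  have sUL : ((U^T)^! <= L^T)%MS.
    have L_ortho2 : ((L^T)^!^! <= L^T)%MS by rewrite ortho_id.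
    by apply: submx_trans L_ortho2; rewrite submx_ortho perp_basis_orthoE.
  by apply: submx_trans sUL; rewrite orthomx1E -map_trmx -trmx_mul Uy0 trmx0.
by case/submxP=> D yD; exists D^T; rewrite -[y]trmxK yD trmx_mul trmxK.
Qed.

Lemma perp_basis_inj q (z : 'M[C]_(k, q)) : U *m z = 0 -> z = 0.
Proof.
move=> Uz0; apply: trmx_inj; apply: (row_free_inj (proj1 UperpL)).
by rewrite trmx0 mul0mx -trmx_mul Uz0 trmx0.
Qed.

End PerpBasis.

Lemma perp_basis_cross_unit (C : numClosedFieldType) r k c
    (U W : 'M[C]_(r, k)) (L K : 'M[C]_(r, c)) :
  perp_basis U L -> perp_basis W K -> L ^t* *m K \in unitmx ->
  W ^t* *m U \in unitmx.
Proof.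
move=> UperpL WperpK LK_unit.
rewrite -row_full_unit -cokermx_eq0; apply/eqP.
set v := cokermx _; have WUv0 : W ^t* *m (U *m v) = 0.
  by rewrite mulmxA mulmx_coker.
have [z Uv_eq] := perp_basis_range WperpK WUv0.
have z0 : z = 0.
  have LKz0 : L ^t* *m K *m z = 0.
    by rewrite -mulmxA -Uv_eq mulmxA (perp_basis_mul0 UperpL) mul0mx.
  by rewrite -(mulKmx LK_unit z) LKz0 mulmx0.
by apply: (perp_basis_inj UperpL); rewrite Uv_eq z0 mulmx0.
Qed.

Section UnitarilyInvariantNorm.
Variables (C : numClosedFieldType) (N : forall k, 'M[C]_k -> C).
Hypothesis N_ui : unitarily_invariant_norm N.

Lemma uinorm_conj_unitary k l (P : 'M[C]_(l, k)) (M : 'M[C]_k) :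
  k = l -> P ^t* *m P = 1%:M -> N (P *m M *m P ^t*) = N M.
Proof.
move=> kl; case: l / kl in P *; move=> PtP.
have [_ [_ [_ [_ [N_unitary _]]]]] := N_ui.
by apply: N_unitary; rewrite /unitary ?trmxCK //; apply: mulmx1C.
Qed.

Lemma uinorm_conj_isometry n k (Z : 'M[C]_(n, k)) (M : 'M[C]_k) :
  Z ^t* *m Z = 1%:M -> N (Z *m M *m Z ^t*) = N M.
Proof.
(* Complete the rows of Z^H to a unitary matrix, then strip the padding. *)
move=> ZtZ; set V := Z ^t*.
have V_unitary : V \is unitarymx by apply/unitarymxP; rewrite trmxCK.
set S1 := schmidt (row_base V); set S2 := schmidt (row_base V^!%MS).
have S1_unitary : S1 \is unitarymx.
  by apply: schmidt_unitarymx; apply: rank_leq_col.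
have /submxP [D VD] : (V <= S1)%MS.
  by apply: submx_trans (schmidt_sub _); rewrite eq_row_base.
have D_unitary : D *m D ^t* = 1%:M.
  have -> : D *m D ^t* = V *m V ^t*.
    by rewrite [in RHS]VD trmxC_mul mulmxA mulmxtVK.
  exact/unitarymxP.
have ZE : Z = S1 ^t* *m D ^t* by rewrite -trmxC_mul -VD trmxCK.
have -> : Z *m M *m Z ^t* =
    (col_mx S1 S2) ^t* *m block_mx (D ^t* *m M *m D ^t* ^t*) 0 0 0
      *m (col_mx S1 S2) ^t* ^t*.
  rewrite !trmxCK trmxC_col_mx mul_row_block !mulmx0 !addr0 mul_row_col.
  by rewrite mul0mx addr0 ZE !trmxC_mul !trmxCK !mulmxA.
have [_ [_ [_ [_ [_ N_pad]]]]] := N_ui.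
rewrite uinorm_conj_unitary ?N_pad ?uinorm_conj_unitary ?trmxCK //.
- exact/esym/mxrank_unitary.
- exact: add_rank_ortho.
- by apply/unitarymxP; apply: schmidt_complete_unitarymx.
Qed.

End UnitarilyInvariantNorm.

Section ProjectedRiccati.
Variables (C : numClosedFieldType) (r k p m : nat).
Variables (K H : 'M[C]_(r, k)) (Ct : 'M[C]_(r, p)) (Bk : 'M[C]_(k, m)).
Variable Y : 'M[C]_k.

Definition proj_riccati : 'M[C]_r :=
  H *m Y *m K ^t* + K *m Y *m H ^t* + Ct *m Ct ^t*
  - K *m Y *m Bk *m Bk ^t* *m Y *m K ^t*.

Lemma proj_riccati_herm : Y ^t* = Y -> proj_riccati ^t* = proj_riccati.
Proof.
move=> Yh; rewrite /proj_riccati !(trmxCB, trmxCD, trmxC_mul, trmxCK) Yh.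
by rewrite !mulmxA [_ *m H ^t* + _]addrC.
Qed.

Lemma proj_riccati_galerkin (P : 'M[C]_(r, k)) :
  K ^t* *m P = 1%:M ->
  P ^t* *m proj_riccati *m P = riccati (H ^t* *m P) Bk (Ct ^t* *m P) Y.
Proof.
move=> KP1; have PK1 : P ^t* *m K = 1%:M.
  by apply: trmxC_inj; rewrite trmxC_mul trmxCK KP1 trmxC1.
rewrite /proj_riccati /riccati !(trmxC_mul, trmxCK).
rewrite !(mulmxDl, mulmxDr, mulmxBl, mulmxBr, mulmxN, mulNmx, mulmxA).
have XKP (q : nat) (X : 'M[C]_(q, k)) : X *m K ^t* *m P = X.
  by rewrite -mulmxA KP1 mulmx1.
by rewrite !XKP PK1 !mul1mx.
Qed.

Lemma proj_riccati_oblique (U : 'M[C]_(r, p)) (G : 'M[C]_(p, r)) :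
  G *m K = 0 ->
  (proj_riccati - 2^-1 *: (U *m G *m proj_riccati)) *m G ^t* =
  K *m Y *m H ^t* *m G ^t* + (Ct - 2^-1 *: (U *m G *m Ct)) *m Ct ^t* *m G ^t*.
Proof.
move=> GK0; have KG0 : K ^t* *m G ^t* = 0 by apply: trmxC_mul_eq0.
have XKG (q : nat) (X : 'M[C]_(q, k)) : X *m K ^t* *m G ^t* = 0.
  by rewrite -mulmxA KG0 mulmx0.
have GKX (q : nat) (X : 'M[C]_(k, q)) : G *m (K *m X) = 0.
  by rewrite mulmxA GK0 mul0mx.
have MG :
    proj_riccati *m G ^t* = K *m Y *m H ^t* *m G ^t* + Ct *m Ct ^t* *m G ^t*.
  by rewrite /proj_riccati !(mulmxDl, mulNmx) !XKG add0r oppr0 addr0.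
rewrite mulmxBl -scalemxAl -(mulmxA (U *m G)) MG mulmxDr mulmxBl -scalemxAl.
by rewrite -!mulmxA GKX mulmx0 add0r mulmxBl -scalemxAl -!mulmxA addrA.
Qed.

Lemma proj_riccati_galerkin_orth (L : 'M[C]_(r, k)) :
  K ^t* *m L \in unitmx ->
  riccati (H ^t* *m L *m invmx (K ^t* *m L)) Bk
          (Ct ^t* *m L *m invmx (K ^t* *m L)) Y = 0 ->
  L ^t* *m proj_riccati *m L = 0.
Proof.
move=> KL_unit ric0; pose P := L *m invmx (K ^t* *m L).
have PMP0 : P ^t* *m proj_riccati *m P = 0.
  by rewrite proj_riccati_galerkin /P ?mulmxA ?mulmxV.
have -> : L = P *m (K ^t* *m L) by rewrite mulmxKV.
clearbody P; move: (K ^t* *m L) => X.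
rewrite trmxC_mul !mulmxA -(mulmxA _ (P ^t*)) -(mulmxA _ (P ^t* *m _)).
by rewrite PMP0 mulmx0 mul0mx.
Qed.

End ProjectedRiccati.

Section ObliqueSplitting.
Variables (C : numClosedFieldType) (r p : nat).
Variables (M : 'M[C]_r) (U : 'M[C]_(r, p)) (G : 'M[C]_(p, r)).
Hypothesis M_herm : M ^t* = M.

Lemma herm_split_of_proj0 :
  (1%:M - U *m G) *m M *m (1%:M - U *m G) ^t* = 0 ->
  let T := (M - 2^-1 *: (U *m G *m M)) *m G ^t* in
  U *m T ^t* + T *m U ^t* = M.
Proof.
have half_real : (2^-1 : C)^* = 2^-1 by rewrite fmorphV rmorph_nat.
have halfD : (2^-1 : C) + 2^-1 = 1 by rewrite [RHS]splitr mul1r.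
rewrite trmxCB trmxC1 mulmxBl mul1mx !mulmxBr !mulmx1 trmxC_mul !mulmxA.
move=> /eqP; rewrite subr_eq0 => /eqP proj0 T.
rewrite /T !(trmxCB, trmxCZ, trmxC_mul, trmxCK) M_herm half_real.
rewrite !(mulmxBr, mulmxBl) -!scalemxAr -!scalemxAl !mulmxA in proj0 *.
rewrite addrACA -opprD -scalerDl halfD scale1r -addrA -proj0.
by rewrite addrC subrK.
Qed.

Lemma perp_basis_herm_split c (L : 'M[C]_(r, c)) :
  perp_basis U L -> G *m U = 1%:M -> L ^t* *m M *m L = 0 ->
  let T := (M - 2^-1 *: (U *m G *m M)) *m G ^t* in
  U *m T ^t* + T *m U ^t* = M.
Proof.
move=> UperpL GU1 LML0; apply: herm_split_of_proj0.
have [Z PiE] : exists Z, (1%:M - U *m G) ^t* = L *m Z.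
  apply: (perp_basis_range UperpL); rewrite -trmxC_mul mulmxBl mul1mx.
  by rewrite -mulmxA GU1 mulmx1 subrr trmxC0.
rewrite PiE -[1%:M - U *m G]trmxCK PiE trmxC_mul !mulmxA.
by rewrite -(mulmxA _ (L ^t*)) -(mulmxA _ (L ^t* *m M)) LML0 mulmx0 mul0mx.
Qed.

End ObliqueSplitting.

Lemma riccati_arnoldi (C : numClosedFieldType) n m p r k
    (A : 'M[C]_n) (B : 'M[C]_(n, m)) (Cm : 'M[C]_(p, n)) (V : 'M[C]_(n, r))
    (K H : 'M[C]_(r, k)) (Ct : 'M[C]_(r, p)) (Y : 'M[C]_k) :
  A ^t* *m V *m K = V *m H -> Cm ^t* = V *m Ct ->
  riccati A B Cm (V *m K *m Y *m K ^t* *m V ^t*) =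
  V *m proj_riccati K H Ct (K ^t* *m V ^t* *m B) Y *m V ^t*.
Proof.
move=> AVK CmE; have KVA : K ^t* *m V ^t* *m A = H ^t* *m V ^t*.
  by apply: trmxC_inj; rewrite !trmxC_mul !trmxCK !mulmxA AVK.
have XKVA (q : nat) (X : 'M[C]_(q, k)) :
    X *m K ^t* *m V ^t* *m A = X *m H ^t* *m V ^t*.
  by rewrite -!mulmxA (mulmxA (K ^t*)) KVA mulmxA.
rewrite /riccati /proj_riccati -[Cm]trmxCK CmE !(trmxC_mul, trmxCK).
by rewrite !(mulmxDl, mulmxDr, mulmxN, mulNmx, mulmxA) AVK XKVA.
Qed.

Lemma mul_row_swap_row (C : numClosedFieldType) r p (U T : 'M[C]_(r, p)) :
  row_mx U T *m block_mx 0 1%:M 1%:M 0 *m (row_mx U T) ^t* =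
  U *m T ^t* + T *m U ^t*.
Proof.
rewrite trmxC_row_mx mul_row_block !mulmx0 !mulmx1 add0r addr0 mul_row_col.
by rewrite addrC.
Qed.

Theorem mainTheorem1 (C : numClosedFieldType) (n m p j : nat)
  (A : 'M[C]_n) (B : 'M[C]_(n, m)) (Cm : 'M[C]_(p, n)) (s : nat -> C)
  (V : 'M[C]_(n, j.+1 * p)) (K H : 'M[C]_(j.+1 * p, j * p))
  (Ct : 'M[C]_(j.+1 * p, p)) (L : 'M[C]_(j.+1 * p, j * p))
  (Y : 'M[C]_(j * p)) (U W : 'M[C]_(j.+1 * p, p)) :
  (0 < j)%N ->
  orth_BRAD A Cm s V K H ->
  Cm ^t* = V *m Ct ->
  L ^t* *m K \in unitmx ->
  let KL := invmx (K ^t* *m L) in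
  let Aj := H ^t* *m L *m KL in
  let Bj := K ^t* *m V ^t* *m B in
  let Cj := Ct ^t* *m L *m KL in
  Y ^t* = Y ->
  Aj ^t* *m Y + Y *m Aj + Cj ^t* *m Cj - Y *m Bj *m Bj ^t* *m Y = 0 ->
  let Xj := V *m K *m Y *m K ^t* *m V ^t* in
  perp_basis U L ->
  perp_basis W K ->
  W ^t* *m U \in unitmx /\
  (let UW := invmx (U ^t* *m W) in
   let T := K *m Y *m H ^t* *m W *m UW
            + (Ct - 2^-1 *: (U *m invmx (W ^t* *m U) *m W ^t* *m Ct))
              *m Ct ^t* *m W *m UW in
   forall (Q : 'M[C]_(j.+1 * p, p + p)) (R : 'M[C]_(p + p)),
     Q ^t* *m Q = 1%:M ->
     row_mx U T = Q *m R ->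
     riccati A B Cm Xj = V *m (U *m T ^t* + T *m U ^t*) *m V ^t* /\
     (\rank (riccati A B Cm Xj) <= p + p)%N /\
     (forall N : forall k, 'M[C]_k -> C, unitarily_invariant_norm N ->
        N n (riccati A B Cm Xj)
        = N (p + p)%N (R *m block_mx 0 1%:M 1%:M 0 *m R ^t*))).
Proof.
move=> _ [_ [_ [VtV [_ [AVK _]]]]] CmE LK_unit KL Aj Bj Cj Yh ric0 Xj.
move=> UperpL WperpK; have := perp_basis_cross_unit UperpL WperpK LK_unit.
move=> WU_unit; split=> // UW T Q R QtQ UTE.
set M := proj_riccati K H Ct Bj Y.
have RicE : riccati A B Cm Xj = V *m M *m V ^t* := riccati_arnoldi B Y AVK CmE.
have LML0 : L ^t* *m M *m L = 0.
  apply: proj_riccati_galerkin_orth ric0.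
  by rewrite -trmxC_unit trmxC_mul trmxCK.
pose G := invmx (W ^t* *m U) *m W ^t*.
have GU1 : G *m U = 1%:M by rewrite -mulmxA mulVmx.
have GK0 : G *m K = 0 by rewrite -mulmxA (perp_basis_mul0C WperpK) mulmx0.
have TE : T = (M - 2^-1 *: (U *m G *m M)) *m G ^t*.
  rewrite proj_riccati_oblique // /G.
  by rewrite trmxC_mul trmxC_inv trmxC_mul trmxCK !mulmxA.
have UT_split : U *m T ^t* + T *m U ^t* = M.
  rewrite TE; apply: perp_basis_herm_split UperpL GU1 LML0.
  exact: proj_riccati_herm Yh.
have RicQR : riccati A B Cm Xj =
    (V *m Q) *m (R *m block_mx 0 1%:M 1%:M 0 *m R ^t*) *m (V *m Q) ^t*.
  by rewrite RicE -UT_split -mul_row_swap_row UTE !trmxC_mul !mulmxA.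
have VQ_iso : (V *m Q) ^t* *m (V *m Q) = 1%:M.
  by rewrite trmxC_mul mulmxA -(mulmxA _ _ V) VtV mulmx1 QtQ.
split; first by rewrite RicE UT_split.
split.
  rewrite RicQR; apply: leq_trans (mxrankM_maxl _ _) _.
  by apply: leq_trans (mxrankM_maxl _ _) _; apply: rank_leq_col.
by move=> N N_ui; rewrite RicQR; apply: uinorm_conj_isometry.
Qed.
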